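(* Let $(X,d_X)$ be a proper, doubling metric space and $p\in X$, and assume $X$ is comparable $\eta$-self-quasisymmetric at $p$. Then $X$ admits an $\eta'$-quasisymmetric embedding into every proper weak tangent in $PWT_p(X)$, where $\eta'(t)=1/\eta^{-1}(1/t)$.
   Context: $\eta$ is a homeomorphism of $[0,\infty)$; a homeomorphism $f$ (onto its image) is $\eta$-quasisymmetric if $d(f(x),f(y))/d(f(x),f(z))\le\eta(d(x,y)/d(x,z))$ for $x\ne z$. $X$ is comparable $\eta$-self-quasisymmetric at $p$ if there are $r_p>0$ and $C_p>0$ such that for every $0<r<r_p$ there is a subset $U\subset B(p,r)$ with $p\in U$, $r/C_p\le\operatorname{diam}U\le C_pr$, and an $\eta$-quasisymmetric homeomorphism from $U$ onto $X$. Proper: closed balls compact; doubling: every set of diameter $d$ covered by a bounded number of sets of diameter $\le d/2$. A proper weak tangent of $X$ at $p$ is a pointed Gromov–Hausdorff limit of $(X,p,d_X/\lambda_n)$ with $\lambda_n\to0^+$ (pointed GH convergence $(X_n,p_n,d_n)\to(Z,z,d)$, $Z$ complete: for every $r,\varepsilon>0$, for large $n$ there is a map $g:B(p_n,r)\to Z$ with $g(p_n)=z$, additive distortion $<\varepsilon$, and $B(z,r-\varepsilon)$ in the $\varepsilon$-neighborhood of $g(B(p_n,r))$); $PWT_p(X)$ is the set of these. *)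

From Stdlib Require Import Reals Lra List.
Open Scope R_scope.

Record MetricSpace := {
  carrier :> Type;
  dist : carrier -> carrier -> R;
  dist_refl : forall x, dist x x = 0;
  dist_sym : forall x y, dist x y = dist y x;
  dist_tri : forall x y z, dist x z <= dist x y + dist y z;
  dist_sep : forall x y, dist x y = 0 -> x = y
}.
Arguments dist {m} _ _.

Section MetricDefs.
Variable X : MetricSpace.

Definition ball (p : X) (r : R) : X -> Prop := fun x => dist p x < r.
Definition cball (p : X) (r : R) : X -> Prop := fun x => dist p x <= r.

Definition is_open (U : X -> Prop) : Prop :=
  forall x, U x -> exists e, 0 < e /\ forall y, dist x y < e -> U y.

Definition is_compact (K : X -> Prop) : Prop :=
  forall (I : Type) (U : I -> X -> Prop),
    (forall i, is_open (U i)) ->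
    (forall x, K x -> exists i, U i x) ->
    exists l : list I, forall x, K x -> exists i, In i l /\ U i x.

Definition proper_space : Prop := forall p r, is_compact (cball p r).

Definition diam_le (A : X -> Prop) (D : R) : Prop :=
  forall x y, A x -> A y -> dist x y <= D.
Definition diam_ge (A : X -> Prop) (a : R) : Prop :=
  forall D, diam_le A D -> a <= D.

Definition doubling : Prop :=
  exists N : nat, forall (A : X -> Prop) (D : R),
    diam_le A D -> (forall D', diam_le A D' -> D <= D') ->
    exists B : nat -> X -> Prop,
      (forall i, diam_le (B i) (D / 2)) /\
      (forall x, A x -> exists i, (i < N)%nat /\ B i x).

Definition cauchy (u : nat -> X) : Prop :=
  forall e, 0 < e -> exists N, forall m n, (N <= m)%nat -> (N <= n)%nat ->
    dist (u m) (u n) < e.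
Definition seq_converges (u : nat -> X) (l : X) : Prop :=
  forall e, 0 < e -> exists N, forall n, (N <= n)%nat -> dist (u n) l < e.
Definition complete_space : Prop :=
  forall u, cauchy u -> exists l, seq_converges u l.

End MetricDefs.

Definition cont_on_nonneg (g : R -> R) : Prop :=
  forall t, 0 <= t -> forall e, 0 < e -> exists d, 0 < d /\
    forall s, 0 <= s -> Rabs (s - t) < d -> Rabs (g s - g t) < e.

Definition homeo_nonneg (eta : R -> R) : Prop :=
  (forall t, 0 <= t -> 0 <= eta t) /\
  (forall s t, 0 <= s -> 0 <= t -> eta s = eta t -> s = t) /\
  (forall u, 0 <= u -> exists t, 0 <= t /\ eta t = u) /\
  cont_on_nonneg eta /\
  (exists inv : R -> R,
     (forall u, 0 <= u -> 0 <= inv u /\ eta (inv u) = u) /\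
     cont_on_nonneg inv).

Definition qs_embedding_on {X Y : MetricSpace} (eta : R -> R)
    (U : X -> Prop) (f : X -> Y) : Prop :=
  (forall x x', U x -> U x' -> f x = f x' -> x = x') /\
  (forall x, U x -> forall e, 0 < e -> exists d, 0 < d /\
     forall x', U x' -> dist x x' < d -> dist (f x) (f x') < e) /\
  (forall x, U x -> forall e, 0 < e -> exists d, 0 < d /\
     forall x', U x' -> dist (f x) (f x') < d -> dist x x' < e) /\
  (forall x y z, U x -> U y -> U z -> x <> z ->
     dist (f x) (f y) / dist (f x) (f z) <= eta (dist x y / dist x z)).

Definition qs_embedding {X Y : MetricSpace} (eta : R -> R) (f : X -> Y) : Prop :=
  qs_embedding_on eta (fun _ => True) f.

Definition comparable_self_qs (X : MetricSpace) (eta : R -> R) (p : X) : Prop :=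
  exists rp Cp, 0 < rp /\ 0 < Cp /\
    forall r, 0 < r -> r < rp ->
      exists (U : X -> Prop) (f : X -> X),
        (forall x, U x -> ball X p r x) /\ U p /\
        diam_ge X U (r / Cp) /\ diam_le X U (Cp * r) /\
        qs_embedding_on eta U f /\
        (forall y : X, exists x, U x /\ f x = y).

Definition pGH_conv_scaled (X : MetricSpace) (p : X) (lam : nat -> R)
    (Z : MetricSpace) (z : Z) : Prop :=
  forall r e, 0 < r -> 0 < e -> exists N, forall n, (N <= n)%nat ->
    exists g : X -> Z, g p = z /\
      (forall x y, dist p x / lam n < r -> dist p y / lam n < r ->
         Rabs (dist (g x) (g y) - dist x y / lam n) < e) /\
      (forall w : Z, dist z w < r - e ->
         exists x, dist p x / lam n < r /\ dist (g x) w < e).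

Definition proper_weak_tangent (X : MetricSpace) (p : X)
    (Z : MetricSpace) (z : Z) : Prop :=
  proper_space Z /\ complete_space Z /\
  exists lam : nat -> R,
    (forall n, 0 < lam n) /\
    (forall e, 0 < e -> exists N, forall n, (N <= n)%nat -> lam n < e) /\
    pGH_conv_scaled X p lam Z z.

(** eta'(t) = 1 / eta^{-1}(1/t), with eta'(0) = 0 (its limit value). *)
Definition eta_prime (etainv : R -> R) (t : R) : R :=
  if Req_EM_T t 0 then 0 else / etainv (/ t).

(** For small r the self-quasisymmetric map f_r : U_r -> X (with U_r in B(p, r)) is onto,
    so X = f_r(U_r) is bounded and, being proper, compact; its inverse psi_r : X -> U_r
    is eta'-quasisymmetric, since inverting an eta-quasisymmetric map replaces eta by
    t |-> 1 / eta^-1 (1 / t).  Measured in the metric d / r, the maps psi_r take values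
    in the unit ball about p and, because diam U_r >= r / C, their images are
    uniformly spread out; quasisymmetry then makes the family uniformly equicontinuous
    and uniformly non-collapsing.  Composing with the Gromov-Hausdorff approximations
    of the tangent and extracting a uniformly convergent subsequence (Arzela-Ascoli)
    gives a map X -> Z which inherits the quasisymmetry inequality and both uniform
    bounds, hence is an eta'-quasisymmetric embedding. *)

From Stdlib Require Import Reals Lra Lia List Classical ClassicalEpsilon.
From Coquelicot Require Import Rcomplements.
Open Scope R_scope.

Lemma inv_INR_S_gt0 (n : nat) : 0 < / INR (S n).
Proof. apply Rinv_0_lt_compat, lt_0_INR. lia. Qed.

Lemma inv_INR_S_le1 (n : nat) : / INR (S n) <= 1.
Proof.
  rewrite <- Rinv_1. apply Rinv_le_contravar; [lra|].
  rewrite S_INR. pose proof (pos_INR n). lra.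
Qed.

Lemma inv_INR_S_small (e : R) :
  0 < e -> exists N, forall n, (N <= n)%nat -> / INR (S n) < e.
Proof.
  intros He. destruct (archimed_cor1 e He) as [N [HN HN0]].
  exists N. intros n Hn. apply Rle_lt_trans with (/ INR N); [|exact HN].
  apply Rinv_le_contravar; [apply lt_0_INR; lia | apply le_INR; lia].
Qed.

Section MetricFacts.
Variable M : MetricSpace.

Lemma dist_ge0 (x y : M) : 0 <= dist x y.
Proof.
  pose proof (dist_tri M x y x) as Htri.
  rewrite dist_refl, (dist_sym M y x) in Htri. lra.
Qed.

Lemma dist_gt0 (x y : M) : x <> y -> 0 < dist x y.
Proof.
  intros Hxy. destruct (dist_ge0 x y) as [|Hz]; [assumption|].
  exfalso. apply Hxy, dist_sep. auto.
Qed.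

Lemma dist_tri_l (x y z : M) : dist y z <= dist x y + dist x z.
Proof. rewrite (dist_sym M x y). apply dist_tri. Qed.

Lemma dist_dist_le (a b a' b' : M) :
  Rabs (dist a b - dist a' b') <= dist a a' + dist b b'.
Proof.
  pose proof (dist_tri M a a' b). pose proof (dist_tri M a' b' b).
  pose proof (dist_tri M a' a b'). pose proof (dist_tri M a b b').
  rewrite (dist_sym M a' a), (dist_sym M b' b) in *. apply Rabs_le. lra.
Qed.

Lemma diam_ge_witness (A : M -> Prop) (a D : R) :
  diam_ge M A a -> D < a -> exists x y, A x /\ A y /\ D < dist x y.
Proof.
  intros Hge HD. apply NNPP. intros Hno.
  assert (Hle : diam_le M A D).
  { intros x y Hx Hy. apply Rnot_lt_le. intros Hxy. apply Hno. eauto. }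
  specialize (Hge D Hle). lra.
Qed.

Lemma exists_far_point (u v x : M) : exists w, dist u v / 2 <= dist x w.
Proof.
  destruct (Rle_or_lt (dist u v / 2) (dist x u)) as [|Hxu]; [eauto|].
  exists v. pose proof (dist_tri_l x u v). lra.
Qed.

Definition totally_bounded : Prop :=
  forall rho, 0 < rho -> exists l : list M, forall x, exists c, In c l /\ dist c x < rho.

Lemma compact_finite_net (K : M -> Prop) (rho : R) :
  is_compact M K -> 0 < rho ->
  exists l : list M, forall x, K x -> exists c, In c l /\ dist c x < rho.
Proof.
  intros HK Hrho.
  destruct (HK M (fun c => ball M c rho)) as [l Hl].
  - intros c x Hx. unfold ball in *. exists (rho - dist c x). split; [lra|].
    intros y Hy. pose proof (dist_tri M c x y). lra.
  - intros x _. exists x. unfold ball. rewrite dist_refl. lra.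
  - exists l. exact Hl.
Qed.

Lemma proper_bounded_totally_bounded (p : M) (R0 : R) :
  proper_space M -> (forall x, dist p x <= R0) -> totally_bounded.
Proof.
  intros Hproper Hbounded rho Hrho.
  destruct (compact_finite_net (cball M p R0) rho (Hproper p R0) Hrho) as [l Hl].
  exists l. intros x. apply Hl, Hbounded.
Qed.

End MetricFacts.

Lemma continuity_clamp (g : R -> R) (v : R) :
  cont_on_nonneg g -> continuity (fun x => g (Rmax x 0) - v).
Proof.
  intros Hg x0. unfold continuity_pt, continue_in, limit1_in, limit_in. simpl. unfold R_dist.
  intros e He.
  destruct (Hg (Rmax x0 0) (Rmax_r _ _) e He) as [d [Hd Hclose]].
  exists d. split; [exact Hd|]. intros x [_ Hx].
  replace (g (Rmax x 0) - v - (g (Rmax x0 0) - v)) with (g (Rmax x 0) - g (Rmax x0 0)) by ring.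
  apply Hclose; [apply Rmax_r|].
  unfold Rmax, Rabs in *. repeat destruct Rle_dec; repeat destruct Rcase_abs; lra.
Qed.

Lemma cont_on_nonneg_ivt (g : R -> R) (a b v : R) :
  cont_on_nonneg g -> 0 <= a -> 0 <= b -> (g a - v) * (g b - v) <= 0 ->
  exists u, Rmin a b <= u <= Rmax a b /\ g u = v.
Proof.
  intros Hg Ha Hb Hsign.
  pose proof (continuity_clamp g v Hg) as Hcont.
  destruct (Rle_or_lt a b) as [Hab | Hba].
  - destruct (IVT_cor _ a b Hcont Hab) as [u [Hu Hgu]].
    + rewrite !Rmax_left by lra. exact Hsign.
    + exists u. rewrite Rmin_left, Rmax_right by lra.
      rewrite Rmax_left in Hgu by lra. split; [exact Hu | lra].
  - destruct (IVT_cor _ b a Hcont (Rlt_le _ _ Hba)) as [u [Hu Hgu]].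
    + rewrite !Rmax_left by lra. rewrite Rmult_comm. exact Hsign.
    + exists u. rewrite Rmin_right, Rmax_left by lra.
      rewrite Rmax_left in Hgu by lra. split; [exact Hu | lra].
Qed.

Section Homeomorphism.
Variable eta : R -> R.
Hypothesis eta_homeo : homeo_nonneg eta.

Lemma eta_0 : eta 0 = 0.
Proof.
  destruct eta_homeo as [Hge0 [Hinj [Hsurj [Hcont _]]]].
  destruct (Hge0 0 (Rle_refl 0)) as [Hpos | Hz]; [exfalso | auto].
  destruct (Hsurj (eta 0 / 2)) as [t1 [Ht1 E1]]; [lra|].
  destruct (Hsurj (2 * eta 0)) as [t2 [Ht2 E2]]; [lra|].
  (* eta 0 is strictly between eta t1 and eta t2, so by injectivity 0 lies between t1 and t2 *)
  destruct (cont_on_nonneg_ivt eta t1 t2 (eta 0) Hcont Ht1 Ht2) as [u [Hu Hequ]].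
  { rewrite E1, E2. nra. }
  pose proof (Rmin_glb t1 t2 0 Ht1 Ht2).
  apply Hinj in Hequ; [| lra | lra].
  assert (Hmin : Rmin t1 t2 = 0) by lra.
  unfold Rmin in Hmin. destruct Rle_dec in Hmin; subst; lra.
Qed.

Lemma eta_lt (s t : R) : 0 <= s -> s < t -> eta s < eta t.
Proof.
  intros Hs Hst.
  destruct eta_homeo as [Hge0 [Hinj [_ [Hcont _]]]].
  destruct (Rtotal_order (eta s) (eta t)) as [| [Heq | Hgt]]; [assumption | |].
  - apply Hinj in Heq; lra.
  - destruct (cont_on_nonneg_ivt eta 0 s (eta t) Hcont (Rle_refl 0) Hs) as [u [Hu Hequ]].
    { rewrite eta_0. pose proof (Hge0 t ltac:(lra)). nra. }
    rewrite Rmin_left, Rmax_right in Hu by lra.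
    apply Hinj in Hequ; lra.
Qed.

Lemma eta_le (s t : R) : 0 <= s -> s <= t -> eta s <= eta t.
Proof.
  intros Hs [Hst | <-]; [left; apply eta_lt; assumption | right; reflexivity].
Qed.

End Homeomorphism.

Section EtaPrime.
Variables eta etainv : R -> R.
Hypothesis eta_homeo : homeo_nonneg eta.
Hypothesis etainvK : forall u, 0 <= u -> 0 <= etainv u /\ eta (etainv u) = u.

Lemma etainv_le (u t : R) : 0 <= u -> 0 <= t -> u <= eta t -> etainv u <= t.
Proof.
  intros Hu Ht Hut. destruct (etainvK u Hu) as [_ Hinv].
  apply Rnot_lt_le. intros Hlt. pose proof (eta_lt eta eta_homeo t (etainv u) Ht Hlt). lra.
Qed.

Lemma etainv_gt (u t : R) : 0 <= u -> 0 <= t -> eta t < u -> t < etainv u.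
Proof.
  intros Hu Ht Htu. destruct (etainvK u Hu) as [Hinv0 Hinv].
  apply Rnot_le_lt. intros Hle. pose proof (eta_le eta eta_homeo (etainv u) t Hinv0 Hle). lra.
Qed.

Lemma etainv_gt0 (u : R) : 0 < u -> 0 < etainv u.
Proof.
  intros Hu. apply etainv_gt; [lra | lra |]. rewrite (eta_0 eta eta_homeo). exact Hu.
Qed.

Lemma eta_prime_0 : eta_prime etainv 0 = 0.
Proof. unfold eta_prime. destruct (Req_EM_T 0 0); [reflexivity | contradiction]. Qed.

Lemma eta_prime_pos (t : R) : 0 < t -> eta_prime etainv t = / etainv (/ t).
Proof. intros Ht. unfold eta_prime. destruct (Req_EM_T t 0); [lra | reflexivity]. Qed.

Lemma eta_prime_ge0 (t : R) : 0 <= t -> 0 <= eta_prime etainv t.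
Proof.
  intros [Ht | <-]; [|rewrite eta_prime_0; lra].
  rewrite eta_prime_pos by exact Ht.
  left. apply Rinv_0_lt_compat, etainv_gt0, Rinv_0_lt_compat, Ht.
Qed.

Lemma eta_prime_le (s t : R) : 0 <= s -> s <= t -> eta_prime etainv s <= eta_prime etainv t.
Proof.
  intros [Hs | <-] Hst; [|rewrite eta_prime_0; apply eta_prime_ge0; exact Hst].
  rewrite !eta_prime_pos by lra.
  assert (Hts : / t <= / s) by (apply Rinv_le_contravar; lra).
  apply Rinv_le_contravar; [apply etainv_gt0, Rinv_0_lt_compat; lra |].
  destruct (etainvK (/ s)) as [Hinv0 Hinv]; [left; apply Rinv_0_lt_compat; lra|].
  apply etainv_le; [left; apply Rinv_0_lt_compat; lra | exact Hinv0 | lra].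
Qed.

Lemma eta_prime_small (e : R) :
  0 < e -> exists rho, 0 < rho /\ forall t, 0 <= t < rho -> eta_prime etainv t < e.
Proof.
  intros He.
  destruct eta_homeo as [Hge0 _].
  pose proof (Hge0 (/ e) (Rlt_le _ _ (Rinv_0_lt_compat _ He))) as Hbig.
  exists (/ (eta (/ e) + 1)). split; [apply Rinv_0_lt_compat; lra|].
  intros t [[Ht | <-] Htrho]; [|rewrite eta_prime_0; exact He].
  rewrite eta_prime_pos by exact Ht.
  assert (Hinv_t : eta (/ e) < / t).
  { apply Rlt_trans with (eta (/ e) + 1); [lra|].
    rewrite <- (Rinv_inv (eta (/ e) + 1)).
    apply Rinv_lt_contravar; [apply Rmult_lt_0_compat; lra | exact Htrho]. }
  assert (Hlarge : / e < etainv (/ t)).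
  { apply etainv_gt; [left; apply Rinv_0_lt_compat; lra | left; apply Rinv_0_lt_compat; lra | exact Hinv_t]. }
  rewrite <- (Rinv_inv e).
  apply Rinv_lt_contravar; [| exact Hlarge].
  pose proof (Rinv_0_lt_compat e He). apply Rmult_lt_0_compat; lra.
Qed.

End EtaPrime.

Definition qs_ineq {X Y : MetricSpace} (E : R -> R) (f : X -> Y) : Prop :=
  forall x y z, x <> z -> dist (f x) (f y) <= dist (f x) (f z) * E (dist x y / dist x z).

Lemma qs_ineq_right_inverse {X Y : MetricSpace} (eta etainv : R -> R)
    (U : X -> Prop) (f : X -> Y) (psi : Y -> X) :
  homeo_nonneg eta -> (forall u, 0 <= u -> 0 <= etainv u /\ eta (etainv u) = u) ->
  qs_embedding_on eta U f -> (forall y, U (psi y) /\ f (psi y) = y) ->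
  qs_ineq (eta_prime etainv) psi.
Proof.
  intros eta_homeo etainvK [_ [_ [_ Hqs]]] Hpsi x y z Hxz.
  destruct (classic (x = y)) as [<- | Hxy].
  { rewrite !dist_refl, Rdiv_0_l, (eta_prime_0 etainv), Rmult_0_r. lra. }
  assert (Hne : psi x <> psi y).
  { intros E. apply Hxy. rewrite <- (proj2 (Hpsi x)), <- (proj2 (Hpsi y)), E. reflexivity. }
  pose proof (Hqs (psi x) (psi z) (psi y) (proj1 (Hpsi x)) (proj1 (Hpsi z)) (proj1 (Hpsi y)) Hne)
    as Hf.
  rewrite !(proj2 (Hpsi _)) in Hf.
  pose proof (dist_gt0 Y x y Hxy) as Dxy. pose proof (dist_gt0 Y x z Hxz) as Dxz.
  pose proof (dist_gt0 X _ _ Hne) as Dy. pose proof (dist_ge0 X (psi x) (psi z)) as Dz.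
  rewrite (eta_prime_pos etainv) by (apply Rdiv_lt_0_compat; assumption).
  rewrite Rinv_div.
  assert (Hinv : etainv (dist x z / dist x y) <= dist (psi x) (psi z) / dist (psi x) (psi y)).
  { apply (etainv_le eta etainv eta_homeo etainvK);
      [left; apply Rdiv_lt_0_compat | apply Rdiv_le_0_compat | ]; assumption. }
  pose proof (etainv_gt0 eta etainv eta_homeo etainvK (dist x z / dist x y)
    ltac:(apply Rdiv_lt_0_compat; assumption)) as Hpos.
  apply (Rle_div_r _ _ _ Dy) in Hinv.
  apply (Rle_div_r _ _ _ Hpos). lra.
Qed.

Section QuasisymmetricBounds.
Variables (X Y : MetricSpace) (E : R -> R) (psi : X -> Y).
Hypothesis E_ge0 : forall t, 0 <= t -> 0 <= E t.
Hypothesis E_le : forall s t, 0 <= s -> s <= t -> E s <= E t.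
Hypothesis psi_qs : qs_ineq E psi.

Lemma qs_ineq_upper (q : Y) (c delta : R) :
  0 < delta -> (forall x : X, exists w, delta <= dist x w) -> (forall x, dist q (psi x) < c) ->
  forall x y, dist (psi x) (psi y) <= 2 * c * E (dist x y / delta).
Proof.
  intros Hdelta Hfar Hball x y.
  destruct (Hfar x) as [w Hw].
  assert (Hxw : x <> w) by (intros <-; rewrite dist_refl in Hw; lra).
  pose proof (dist_gt0 X x w Hxw) as Dxw.
  assert (Hdiam : dist (psi x) (psi w) <= 2 * c).
  { pose proof (Hball x). pose proof (Hball w). pose proof (dist_tri_l Y q (psi x) (psi w)). lra. }
  assert (HE : E (dist x y / dist x w) <= E (dist x y / delta)).
  { apply E_le; [apply Rdiv_le_0_compat; [apply dist_ge0 | exact Dxw]|].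
    apply Rmult_le_compat_l; [apply dist_ge0 | apply Rinv_le_contravar; assumption]. }
  apply Rle_trans with (1 := psi_qs x y w Hxw).
  apply Rmult_le_compat; [apply dist_ge0 | | exact Hdiam | exact HE].
  apply E_ge0, Rdiv_le_0_compat; [apply dist_ge0 | exact Dxw].
Qed.

Lemma qs_ineq_lower (D s : R) (a b : X) :
  (forall x y : X, dist x y <= D) -> s < dist (psi a) (psi b) ->
  forall x z, x <> z -> s / 2 < dist (psi x) (psi z) * E (D / dist x z).
Proof.
  intros HD Hab x z Hxz.
  assert (Hy : exists y, s / 2 < dist (psi x) (psi y)).
  { destruct (Rlt_or_le (s / 2) (dist (psi x) (psi a))); [eauto|].
    exists b. pose proof (dist_tri_l Y (psi x) (psi a) (psi b)). lra. }
  destruct Hy as [y Hy].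
  pose proof (dist_gt0 X x z Hxz) as Dxz.
  apply Rlt_le_trans with (1 := Hy). apply Rle_trans with (1 := psi_qs x y z Hxz).
  apply Rmult_le_compat_l; [apply dist_ge0|].
  apply E_le; [apply Rdiv_le_0_compat; [apply dist_ge0 | exact Dxz]|].
  apply Rmult_le_compat_r; [left; apply Rinv_0_lt_compat, Dxz | apply HD].
Qed.

End QuasisymmetricBounds.

Lemma qs_embedding_of_uniform_bounds {X Y : MetricSpace} (E : R -> R) (h : X -> Y) :
  (forall e, 0 < e -> exists rho, 0 < rho /\ forall x y, dist x y < rho -> dist (h x) (h y) < e) ->
  (forall rho, 0 < rho -> exists beta, 0 < beta /\
     forall x y, rho <= dist x y -> beta <= dist (h x) (h y)) ->
  qs_ineq E h -> qs_embedding E h.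
Proof.
  intros Hcont Hsep Hqs.
  assert (Hsep_pt : forall x x', x <> x' -> 0 < dist (h x) (h x')).
  { intros x x' Hx. destruct (Hsep (dist x x') (dist_gt0 X x x' Hx)) as [beta [Hbeta Hb]].
    specialize (Hb x x' (Rle_refl _)). lra. }
  split; [|split; [|split]].
  - intros x x' _ _ Hhx. apply NNPP. intros Hx.
    specialize (Hsep_pt x x' Hx). rewrite Hhx, dist_refl in Hsep_pt. lra.
  - intros x _ e He. destruct (Hcont e He) as [rho [Hrho Hr]].
    exists rho. split; [exact Hrho|]. intros x' _. apply Hr.
  - intros x _ e He. destruct (Hsep e He) as [beta [Hbeta Hb]].
    exists beta. split; [exact Hbeta|]. intros x' _ Hd.
    apply Rnot_le_lt. intros Hge. specialize (Hb x x' Hge). lra.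
  - intros x y z _ _ _ Hxz.
    apply (Rle_div_l _ _ _ (Hsep_pt x z Hxz)). rewrite Rmult_comm. apply Hqs, Hxz.
Qed.

Section QuasisymmetricLimit.
Variables (X Z : MetricSpace) (A : nat -> X -> X -> R) (h : X -> Z).
Hypothesis h_approx :
  forall e, 0 < e -> exists n, forall x y, Rabs (dist (h x) (h y) - A n x y) < e.

Lemma approx_le (x y : X) (b : R) : (forall n, A n x y <= b) -> dist (h x) (h y) <= b.
Proof.
  intros Hb. apply Rle_plus_epsilon. intros e He.
  destruct (h_approx e He) as [n Hn].
  specialize (Hb n). specialize (Hn x y). apply Rabs_def2 in Hn. lra.
Qed.

Lemma approx_ge (x y : X) (b : R) : (forall n, b <= A n x y) -> b <= dist (h x) (h y).
Proof.
  intros Hb. apply Rle_plus_epsilon. intros e He.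
  destruct (h_approx e He) as [n Hn].
  specialize (Hb n). specialize (Hn x y). apply Rabs_def2 in Hn. lra.
Qed.

Lemma approx_qs_ineq (E : R -> R) :
  (forall t, 0 <= t -> 0 <= E t) ->
  (forall n x y z, x <> z -> A n x y <= A n x z * E (dist x y / dist x z)) ->
  qs_ineq E h.
Proof.
  intros E_ge0 HA x y z Hxz.
  set (Et := E (dist x y / dist x z)).
  assert (HEt : 0 <= Et).
  { apply E_ge0, Rdiv_le_0_compat; [apply dist_ge0 | apply dist_gt0, Hxz]. }
  apply Rle_plus_epsilon. intros e He.
  set (e' := e / (Et + 1)).
  assert (He' : 0 < e') by (apply Rdiv_lt_0_compat; lra).
  assert (He'Et : e' * (Et + 1) = e) by (unfold e'; field; lra).
  destruct (h_approx e' He') as [n Hn].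
  pose proof (Hn x y) as Hy. pose proof (Hn x z) as Hz.
  apply Rabs_def2 in Hy. apply Rabs_def2 in Hz.
  specialize (HA n x y z Hxz). fold Et in HA.
  assert (A n x z * Et <= (dist (h x) (h z) + e') * Et) by (apply Rmult_le_compat_r; lra).
  nra.
Qed.

Lemma approx_qs_embedding (E : R -> R) :
  (forall t, 0 <= t -> 0 <= E t) ->
  (forall e, 0 < e -> exists rho, 0 < rho /\ forall n x y, dist x y < rho -> A n x y < e) ->
  (forall rho, 0 < rho -> exists beta, 0 < beta /\
     forall n x y, rho <= dist x y -> beta <= A n x y) ->
  (forall n x y z, x <> z -> A n x y <= A n x z * E (dist x y / dist x z)) ->
  qs_embedding E h.
Proof.
  intros E_ge0 Hsmall Hlarge HA.
  apply qs_embedding_of_uniform_bounds; [| | exact (approx_qs_ineq E E_ge0 HA)].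
  - intros e He. destruct (Hsmall (e / 2)) as [rho [Hrho Hr]]; [lra|].
    exists rho. split; [exact Hrho|]. intros x y Hxy.
    assert (dist (h x) (h y) <= e / 2) by (apply approx_le; intros n; left; apply Hr, Hxy).
    lra.
  - intros rho Hrho. destruct (Hlarge rho Hrho) as [beta [Hbeta Hb]].
    exists beta. split; [exact Hbeta|]. intros x y Hxy.
    apply approx_ge. intros n. apply Hb, Hxy.
Qed.

End QuasisymmetricLimit.

Definition infinitely_many (s : nat -> Prop) : Prop :=
  forall N, exists n, (N <= n)%nat /\ s n.

Lemma infinite_pigeonhole {A : Type} (s : nat -> Prop) (col : nat -> A -> Prop) (l : list A) :
  infinitely_many s -> (forall n, s n -> exists a, In a l /\ col n a) ->
  exists a, In a l /\ infinitely_many (fun n => s n /\ col n a).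
Proof.
  revert s. induction l as [|a l IH]; intros s Hs Hcol.
  - destruct (Hs 0%nat) as [n [_ Hn]]. destruct (Hcol n Hn) as [c [[] _]].
  - destruct (classic (infinitely_many (fun n => s n /\ col n a))) as [Ha | Ha].
    + exists a. split; [left; reflexivity | exact Ha].
    + apply not_all_ex_not in Ha. destruct Ha as [N HN].
      destruct (IH (fun n => s n /\ (N <= n)%nat)) as [c [Hc Hinf]].
      * intros M. destruct (Hs (Nat.max M N)) as [n [Hn Hsn]].
        exists n. split; [lia | split; [exact Hsn | lia]].
      * intros n [Hsn HNn]. destruct (Hcol n Hsn) as [c [[<- | Hc] Hcn]].
        -- exfalso. apply HN. exists n. auto.
        -- exists c. auto.
      * exists c. split; [right; exact Hc|].
        intros M. destruct (Hinf M) as [n [HMn [[Hsn _] Hcn]]]. exists n. auto.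
Qed.

Lemma infinite_refine_list {A B : Type} (s : nat -> Prop) (col : nat -> A -> B -> Prop)
    (L : list A) (M : list B) :
  infinitely_many s -> (forall n a, exists b, In b M /\ col n a b) ->
  exists s', (forall n, s' n -> s n) /\ infinitely_many s' /\
    forall a, In a L -> exists b, forall n, s' n -> col n a b.
Proof.
  revert s. induction L as [|a L IH]; intros s Hs Hcol.
  - exists s. split; [auto | split; [exact Hs | intros a []]].
  - destruct (infinite_pigeonhole s (fun n b => col n a b) M Hs) as [b [_ Hb]].
    { intros n _. apply Hcol. }
    destruct (IH _ Hb Hcol) as [s' [Hsub [Hinf Hconst]]].
    exists s'. split; [intros n Hn; apply Hsub, Hn|]. split; [exact Hinf|].
    intros a' [<- | Ha'].
    + exists b. intros n Hn. apply Hsub, Hn.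
    + apply Hconst, Ha'.
Qed.

Lemma diagonal_extraction (P : nat -> nat -> nat -> Prop) :
  (forall k s, infinitely_many s -> exists s', (forall n, s' n -> s n) /\
     infinitely_many s' /\ forall n m, s' n -> s' m -> P k n m) ->
  exists sigma : nat -> nat,
    forall k i j, (k <= i)%nat -> (k <= j)%nat -> P k (sigma i) (sigma j).
Proof.
  intros Hrefine.
  destruct (choice (fun (ks : nat * (nat -> Prop)) s' => infinitely_many (snd ks) ->
      (forall n, s' n -> snd ks n) /\ infinitely_many s' /\
      forall n m, s' n -> s' m -> P (fst ks) n m)) as [refine Hrefine'].
  { intros [k s]. destruct (classic (infinitely_many s)) as [Hs | Hs].
    - destruct (Hrefine k s Hs) as [s' Hs']. exists s'. auto.
    - exists s. intros Hs'. contradiction. }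
  pose (F := fix F (k : nat) : nat -> Prop :=
    match k with O => fun _ => True | S k' => refine (k', F k') end).
  assert (F_inf : forall k, infinitely_many (F k)).
  { induction k as [|k IH].
    - intros N. exists N. split; [lia | exact I].
    - apply (Hrefine' (k, F k) IH). }
  assert (F_decr : forall k i n, (k <= i)%nat -> F i n -> F k n).
  { intros k i n Hki. induction Hki as [|i Hki IH]; [auto|].
    intros Hn. apply IH, (Hrefine' (i, F i) (F_inf i)), Hn. }
  destruct (choice (fun i n => F (S i) n)) as [sigma Hsigma].
  { intros i. destruct (F_inf (S i) 0%nat) as [n [_ Hn]]. eauto. }
  exists sigma. intros k i j Hi Hj.
  apply (Hrefine' (k, F k) (F_inf k)).
  - apply (F_decr (S k) (S i)); [lia | apply Hsigma].
  - apply (F_decr (S k) (S j)); [lia | apply Hsigma].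
Qed.

Definition asymptotically_equicontinuous {X Z : MetricSpace} (H : nat -> X -> Z) : Prop :=
  forall e, 0 < e -> exists rho N, 0 < rho /\
    forall n x y, (N <= n)%nat -> dist x y < rho -> dist (H n x) (H n y) < e.

Section ArzelaAscoli.
Variables (X Z : MetricSpace) (K : Z -> Prop) (H : nat -> X -> Z).
Hypothesis X_totally_bounded : totally_bounded X.
Hypothesis K_compact : is_compact Z K.
Hypothesis H_in_K : forall n x, K (H n x).
Hypothesis H_equicontinuous : asymptotically_equicontinuous H.

Lemma uniformly_close_refinement (e : R) (k : nat) (s : nat -> Prop) :
  0 < e -> infinitely_many s ->
  exists s', (forall n, s' n -> s n) /\ infinitely_many s' /\
    forall n m, s' n -> s' m -> (k <= n)%nat /\ forall x, dist (H n x) (H m x) < e.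
Proof.
  intros He Hs.
  destruct (H_equicontinuous (e / 3)) as [rho [N [Hrho Hclose]]]; [lra|].
  destruct (X_totally_bounded rho Hrho) as [L HL].
  destruct (compact_finite_net Z K (e / 6) K_compact) as [M HM]; [lra|].
  (* freeze the value of H n, up to e/6, at every point of a rho-net of X *)
  destruct (infinite_refine_list (fun n => s n /\ (Nat.max k N <= n)%nat)
      (fun n a c => dist c (H n a) < e / 6) L M) as [s' [Hsub [Hinf Hconst]]].
  - intros N0. destruct (Hs (Nat.max N0 (Nat.max k N))) as [n [Hn Hsn]].
    exists n. split; [lia | split; [exact Hsn | lia]].
  - intros n a. apply HM, H_in_K.
  - exists s'. split; [intros n Hn; apply Hsub, Hn|]. split; [exact Hinf|].
    intros n m Hn Hm. destruct (Hsub n Hn) as [_ Hkn]. destruct (Hsub m Hm) as [_ Hkm].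
    split; [lia|]. intros x.
    destruct (HL x) as [a [HaL Hax]]. destruct (Hconst a HaL) as [c Hc].
    rewrite dist_sym in Hax.
    pose proof (Hclose n x a ltac:(lia) Hax). pose proof (Hclose m x a ltac:(lia) Hax).
    pose proof (Hc n Hn). pose proof (Hc m Hm).
    pose proof (dist_tri Z (H n x) (H n a) (H m x)).
    pose proof (dist_tri Z (H n a) c (H m x)).
    pose proof (dist_tri Z c (H m a) (H m x)).
    rewrite (dist_sym Z (H n a) c), (dist_sym Z (H m a) (H m x)) in *. lra.
Qed.

Lemma arzela_ascoli :
  complete_space Z ->
  exists h : X -> Z, forall e, 0 < e -> forall N,
    exists n, (N <= n)%nat /\ forall x, dist (H n x) (h x) < e.
Proof.
  intros Z_complete.
  destruct (diagonal_extraction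
      (fun k n m => (k <= n)%nat /\ forall x, dist (H n x) (H m x) < / INR (S k)))
    as [sigma Hsigma].
  { intros k s Hs. apply uniformly_close_refinement; [apply inv_INR_S_gt0 | exact Hs]. }
  assert (Hcauchy : forall x, cauchy Z (fun i => H (sigma i) x)).
  { intros x e He. destruct (inv_INR_S_small e He) as [N HN]. exists N. intros i j Hi Hj.
    destruct (Hsigma N i j Hi Hj) as [_ Hd]. specialize (Hd x). specialize (HN N (le_n N)). lra. }
  destruct (choice (fun x l => seq_converges Z (fun i => H (sigma i) x) l)) as [h Hh].
  { intros x. apply Z_complete, Hcauchy. }
  exists h. intros e He N.
  destruct (inv_INR_S_small e He) as [k Hk].
  set (i := Nat.max k N).
  exists (sigma i). split.
  { destruct (Hsigma i i i (le_n i) (le_n i)) as [Hi _]. unfold i in *. lia. }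
  intros x. apply Rle_lt_trans with (/ INR (S i)); [| apply Hk; unfold i; lia].
  apply Rle_plus_epsilon. intros e' He'.
  destruct (Hh x e' He') as [j0 Hj0].
  pose proof (Hj0 (Nat.max j0 i) ltac:(lia)) as Hlim.
  destruct (Hsigma i i (Nat.max j0 i) (le_n i) ltac:(lia)) as [_ Hd].
  pose proof (dist_tri Z (H (sigma i) x) (H (sigma (Nat.max j0 i)) x) (h x)).
  specialize (Hd x). lra.
Qed.

End ArzelaAscoli.

Lemma comparable_self_qs_bounded {X : MetricSpace} (eta : R -> R) (p : X) :
  homeo_nonneg eta -> comparable_self_qs X eta p ->
  (exists u v : X, u <> v) /\ exists R0, forall x, dist p x <= R0.
Proof.
  intros eta_homeo [rp [Cp [Hrp [HCp Hself]]]].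
  destruct (Hself (rp / 2)) as [U [f [HUball [_ [Hdiam [_ [[Hinj [_ [_ Hqs]]] Hsurj]]]]]]];
    [lra | lra |].
  destruct (diam_ge_witness X U (rp / 2 / Cp) 0 Hdiam) as [a [b [Ha [Hb Hab]]]].
  { apply Rdiv_lt_0_compat; lra. }
  assert (Hne : a <> b) by (intros <-; rewrite dist_refl in Hab; lra).
  assert (Hfne : f a <> f b) by (intros E; apply Hne, Hinj; assumption).
  split; [exists (f a), (f b); exact Hfne|].
  (* X = f(U) with diam U < rp, so quasisymmetry bounds every d(f a, f x) *)
  exists (dist p (f a) + dist (f a) (f b) * eta (rp / dist a b)).
  intros y. destruct (Hsurj y) as [x [Hx <-]].
  assert (Hax : dist a x < rp).
  { pose proof (HUball a Ha). pose proof (HUball x Hx). unfold ball in *.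
    pose proof (dist_tri_l X p a x). lra. }
  assert (Hmono : eta (dist a x / dist a b) <= eta (rp / dist a b)).
  { apply (eta_le eta eta_homeo); [apply Rdiv_le_0_compat; [apply dist_ge0 | exact Hab]|].
    apply Rmult_le_compat_r; [left; apply Rinv_0_lt_compat, Hab | lra]. }
  pose proof (Hqs a x b Ha Hx Hb Hne) as Hfx.
  apply (Rle_div_l _ _ _ (dist_gt0 X _ _ Hfne)) in Hfx.
  pose proof (dist_tri X p (f a) (f x)). pose proof (dist_gt0 X _ _ Hfne). nra.
Qed.

Lemma comparable_self_qs_inverses {X : MetricSpace} (eta etainv : R -> R) (p : X) :
  homeo_nonneg eta -> (forall u, 0 <= u -> 0 <= etainv u /\ eta (etainv u) = u) ->
  comparable_self_qs X eta p ->
  exists rp spread, 0 < rp /\ 0 < spread /\ forall r, 0 < r < rp ->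
    exists psi : X -> X, (forall x, dist p (psi x) < r) /\
      (qs_ineq (eta_prime etainv) psi /\ exists a b, r * spread < dist (psi a) (psi b)).
Proof.
  intros eta_homeo etainvK [rp [Cp [Hrp [HCp Hself]]]].
  exists rp, (/ (2 * Cp)). split; [exact Hrp|]. split; [apply Rinv_0_lt_compat; lra|].
  intros r [Hr Hrrp].
  destruct (Hself r Hr Hrrp) as [U [f [HUball [_ [Hdiam [_ [Hqs Hsurj]]]]]]].
  destruct (choice (fun y x => U x /\ f x = y) Hsurj) as [psi Hpsi].
  exists psi. split; [intros x; apply HUball, Hpsi|]. split.
  - exact (qs_ineq_right_inverse eta etainv U f psi eta_homeo etainvK Hqs Hpsi).
  - destruct (diam_ge_witness X U (r / Cp) (r * / (2 * Cp)) Hdiam) as [a [b [Ha [Hb Hab]]]].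
    { rewrite Rinv_mult. pose proof (Rdiv_lt_0_compat r Cp Hr HCp). unfold Rdiv in *. lra. }
    destruct Hqs as [Hinj _].
    assert (Hleft : forall x, U x -> psi (f x) = x).
    { intros x Hx. apply Hinj; [apply Hpsi | exact Hx | apply Hpsi]. }
    exists (f a), (f b). rewrite !Hleft by assumption. exact Hab.
Qed.

Definition rescaled_approximant {X Z : MetricSpace} (p : X) (z : Z)
    (P : R -> (X -> X) -> Prop) (k : nat) (c : R) (psi : X -> X) (H : X -> Z) : Prop :=
  0 < c /\ (forall x, dist p (psi x) < c) /\ P c psi /\ (forall x, dist z (H x) <= 2) /\
  (forall x y, Rabs (dist (H x) (H y) - dist (psi x) (psi y) / c) < / INR (S k)).

Lemma weak_tangent_approximants {X Z : MetricSpace} (p : X) (z : Z) (lam : nat -> R)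
    (rp : R) (P : R -> (X -> X) -> Prop) :
  (forall n, 0 < lam n) -> (forall e, 0 < e -> exists N, forall n, (N <= n)%nat -> lam n < e) ->
  pGH_conv_scaled X p lam Z z -> 0 < rp ->
  (forall r, 0 < r < rp -> exists psi : X -> X, (forall x, dist p (psi x) < r) /\ P r psi) ->
  exists c psi H, forall k, rescaled_approximant p z P k (c k) (psi k) (H k).
Proof.
  intros lam_gt0 lam_to0 Hgh Hrp Hpsi.
  assert (Hstage : forall k, exists t : R * (X -> X) * (X -> Z),
    rescaled_approximant p z P k (fst (fst t)) (snd (fst t)) (snd t)).
  { intros k.
    destruct (Hgh 2 (/ INR (S k)) ltac:(lra) (inv_INR_S_gt0 k)) as [N HN].
    destruct (lam_to0 rp Hrp) as [N' HN'].
    set (n := Nat.max N N').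
    pose proof (lam_gt0 n) as Hlam.
    destruct (Hpsi (lam n) (conj Hlam (HN' n ltac:(lia)))) as [psi [Hball HP]].
    destruct (HN n ltac:(lia)) as [g [Hgp [Hg _]]].
    assert (Hscaled : forall x, dist p (psi x) / lam n < 1).
    { intros x. apply Rlt_div_l; [exact Hlam|]. rewrite Rmult_1_l. apply Hball. }
    assert (Hp : dist p p / lam n < 2) by (rewrite dist_refl, Rdiv_0_l; lra).
    exists (lam n, psi, fun x => g (psi x)). simpl.
    refine (conj Hlam (conj Hball (conj HP (conj _ _)))).
    - intros x. rewrite <- Hgp.
      pose proof (Hscaled x). pose proof (inv_INR_S_le1 k).
      pose proof (Hg p (psi x) Hp ltac:(lra)) as Hgx. apply Rabs_def2 in Hgx.
      rewrite dist_refl, Rdiv_0_l in Hp. lra.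
    - intros x y. pose proof (Hscaled x). pose proof (Hscaled y). apply Hg; lra. }
  destruct (choice _ Hstage) as [T HT].
  exists (fun k => fst (fst (T k))), (fun k => snd (fst (T k))), (fun k => snd (T k)).
  exact HT.
Qed.

Section RescaledLimit.
Variables (X Z : MetricSpace) (p : X) (z : Z) (E : R -> R).
Hypothesis E_ge0 : forall t, 0 <= t -> 0 <= E t.
Hypothesis E_le : forall s t, 0 <= s -> s <= t -> E s <= E t.
Hypothesis E_small :
  forall e, 0 < e -> exists rho, 0 < rho /\ forall t, 0 <= t < rho -> E t < e.
Variables (u v : X) (R0 spread : R).
Hypothesis uv_neq : u <> v.
Hypothesis X_bounded : forall x, dist p x <= R0.
Hypothesis spread_gt0 : 0 < spread.
Variables (c : nat -> R) (psi : nat -> X -> X) (H : nat -> X -> Z).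
Hypothesis approximants : forall k, rescaled_approximant p z
  (fun r f => qs_ineq E f /\ exists a b, r * spread < dist (f a) (f b)) k (c k) (psi k) (H k).

Lemma rescaled_dist_small (e : R) :
  0 < e -> exists rho, 0 < rho /\
    forall k x y, dist x y < rho -> dist (psi k x) (psi k y) / c k < e.
Proof.
  intros He.
  set (delta := dist u v / 2).
  assert (Hdelta : 0 < delta) by (pose proof (dist_gt0 X u v uv_neq); unfold delta; lra).
  destruct (E_small (e / 2)) as [rho0 [Hrho0 HE]]; [lra|].
  exists (rho0 * delta). split; [apply Rmult_lt_0_compat; assumption|].
  intros k x y Hxy.
  destruct (approximants k) as (Hc & Hball & [Hqs _] & _).
  pose proof (qs_ineq_upper X X E (psi k) E_ge0 E_le Hqs p (c k) delta Hdelta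
    (exists_far_point X u v) Hball x y) as Hup.
  assert (HEt : E (dist x y / delta) < e / 2).
  { apply HE. split; [apply Rdiv_le_0_compat; [apply dist_ge0 | exact Hdelta]|].
    apply Rlt_div_l; [exact Hdelta | exact Hxy]. }
  apply Rlt_div_l; [exact Hc|]. nra.
Qed.

Lemma rescaled_dist_large (rho : R) :
  0 < rho -> exists beta, 0 < beta /\
    forall k x y, rho <= dist x y -> beta <= dist (psi k x) (psi k y) / c k.
Proof.
  intros Hrho.
  assert (HD : forall x y : X, dist x y <= 2 * R0).
  { intros x y. pose proof (X_bounded x). pose proof (X_bounded y).
    pose proof (dist_tri_l X p x y). lra. }
  assert (HR0 : 0 <= R0) by (pose proof (X_bounded p); rewrite dist_refl in *; lra).
  set (E1 := E (2 * R0 / rho)).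
  assert (HE1 : 0 <= E1) by (apply E_ge0, Rdiv_le_0_compat; lra).
  exists (spread / (2 * (E1 + 1))). split; [apply Rdiv_lt_0_compat; lra|].
  intros k x y Hxy.
  destruct (approximants k) as (Hc & _ & [Hqs [a [b Hab]]] & _).
  assert (Hxy' : x <> y) by (intros <-; rewrite dist_refl in Hxy; lra).
  pose proof (qs_ineq_lower X X E (psi k) E_le Hqs (2 * R0) (c k * spread) a b HD Hab x y Hxy')
    as Hlow.
  assert (HE : E (2 * R0 / dist x y) <= E1).
  { apply E_le; [apply Rdiv_le_0_compat; lra |].
    apply Rmult_le_compat_l; [lra | apply Rinv_le_contravar; lra]. }
  pose proof (dist_ge0 X (psi k x) (psi k y)).
  assert (dist (psi k x) (psi k y) * E (2 * R0 / dist x y) <= dist (psi k x) (psi k y) * E1)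
    by (apply Rmult_le_compat_l; assumption).
  apply (Rle_div_r _ _ _ Hc).
  replace (spread / (2 * (E1 + 1)) * c k) with (c k * spread / (2 * (E1 + 1))) by (field; lra).
  apply Rle_div_l; [lra | lra].
Qed.

Lemma approximants_equicontinuous : asymptotically_equicontinuous H.
Proof.
  intros e He.
  destruct (rescaled_dist_small (e / 2)) as [rho [Hrho Hsmall]]; [lra|].
  destruct (inv_INR_S_small (e / 2)) as [N HN]; [lra|].
  exists rho, N. split; [exact Hrho|]. intros n x y Hn Hxy.
  destruct (approximants n) as (_ & _ & _ & _ & Happ).
  specialize (Happ x y). apply Rabs_def2 in Happ.
  pose proof (Hsmall n x y Hxy). pose proof (HN n Hn). lra.
Qed.

Hypothesis X_proper : proper_space X.
Hypothesis Z_proper : proper_space Z.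
Hypothesis Z_complete : complete_space Z.

Lemma rescaled_limit_qs : exists h : X -> Z, qs_embedding E h.
Proof.
  assert (H_in_ball : forall k x, cball Z z 2 (H k x)).
  { intros k x. destruct (approximants k) as (_ & _ & _ & Hb & _). apply Hb. }
  destruct (arzela_ascoli X Z (cball Z z 2) H
      (proper_bounded_totally_bounded X p R0 X_proper X_bounded) (Z_proper z 2)
      H_in_ball approximants_equicontinuous Z_complete) as [h Hh].
  exists h.
  apply (approx_qs_embedding X Z (fun k x y => dist (psi k x) (psi k y) / c k) h);
    [| exact E_ge0 | exact rescaled_dist_small | exact rescaled_dist_large |].
  - intros e He.
    destruct (inv_INR_S_small (e / 3)) as [N HN]; [lra|].
    destruct (Hh (e / 3) ltac:(lra) N) as [n [Hn Hclose]].
    exists n. intros x y.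
    destruct (approximants n) as (_ & _ & _ & _ & Happ).
    pose proof (dist_dist_le Z (h x) (h y) (H n x) (H n y)) as Htri.
    rewrite (dist_sym Z (h x) (H n x)), (dist_sym Z (h y) (H n y)), Rabs_le_between in Htri.
    specialize (Happ x y). apply Rabs_def2 in Happ.
    pose proof (Hclose x). pose proof (Hclose y). pose proof (HN n Hn).
    apply Rabs_def1; lra.
  - intros k x y w Hxw.
    destruct (approximants k) as (Hc & _ & [Hqs _] & _).
    rewrite <- Rmult_div_swap. unfold Rdiv.
    apply Rmult_le_compat_r; [left; apply Rinv_0_lt_compat, Hc | apply Hqs, Hxw].
Qed.

End RescaledLimit.

Theorem corollary5p2 (X : MetricSpace) (p : X) (eta etainv : R -> R) :
  proper_space X -> doubling X ->
  homeo_nonneg eta ->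
  (forall u, 0 <= u -> 0 <= etainv u /\ eta (etainv u) = u) ->
  comparable_self_qs X eta p ->
  forall (Z : MetricSpace) (z : Z),
    proper_weak_tangent X p Z z ->
    exists f : X -> Z, qs_embedding (eta_prime etainv) f.
Proof.
  intros X_proper _ eta_homeo etainvK Hself Z z
    [Z_proper [Z_complete [lam [lam_gt0 [lam_to0 Hgh]]]]].
  destruct (comparable_self_qs_bounded eta p eta_homeo Hself) as [[u [v Huv]] [R0 HR0]].
  destruct (comparable_self_qs_inverses eta etainv p eta_homeo etainvK Hself)
    as [rp [spread [Hrp [Hspread Hinverses]]]].
  destruct (weak_tangent_approximants p z lam rp _ lam_gt0 lam_to0 Hgh Hrp Hinverses)
    as [c [psi [H Happrox]]].
  eapply rescaled_limit_qs; eauto.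
  - exact (eta_prime_ge0 eta etainv eta_homeo etainvK).
  - exact (eta_prime_le eta etainv eta_homeo etainvK).
  - exact (eta_prime_small eta etainv eta_homeo etainvK).
Qed.
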